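(* Let $H$ be a real or complex Hilbert space of dimension $n$, let $N\ge n$, let $F=\{f_i\}_{i=1}^N$ be a frame for $H$ with frame operator $S_F$, and let $\{q_i\}_{i=1}^N$ be a weight number sequence. Set $c=\max\{q_i\|S_F^{-1/2}f_i\|^2:1\le i\le N\}$, $\Upsilon_1=\{i:q_i\|S_F^{-1/2}f_i\|^2=c\}$, $\Upsilon_2=\{1,\dots,N\}\setminus\Upsilon_1$, and $H_j=\operatorname{span}\{f_i:i\in\Upsilon_j\}$ for $j=1,2$. Suppose $H_1\cap H_2=\{0\}$ and $|\Upsilon_1|\ge2$. Suppose also that for all $i\neq j$ $$\big|\langle S_F^{-1/2}f_i,S_F^{-1/2}f_j\rangle\big|=\sqrt{\frac{1}{q_iq_j}\cdot\frac{n-\sum_{k=1}^N\frac{1}{q_k^2}}{\sum_{r\ne s}\frac{1}{q_rq_s}}}.$$ Then the canonical dual $\{S_F^{-1}f_i\}_{i=1}^N$ is a 2-erasure probabilistic spectrally optimal dual of $F$.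
   Context: Inner products are linear in the first argument. A frame for $H$ is a finite sequence spanning $H$. Analysis operator: $\Theta_F f=(\langle f,f_i\rangle)_i$. Synthesis operator: $\Theta_G^*(c)=\sum_i c_ig_i$. Frame operator: $S_F=\Theta_F^*\Theta_F$. A dual of $F$ is a frame $G=\{g_i\}_{i=1}^N$ with $f=\sum_i\langle f,f_i\rangle g_i=\sum_i\langle f,g_i\rangle f_i$ for all $f$. A probability sequence satisfies $0\le p_i\le1$ and $\sum p_i=1$. Weight numbers: $q_i=\frac{\sum_j p_j}{\sum_j p_j-p_i}\cdot\frac{N-1}{n}$ (assumed well defined). For $m\in\{1,2\}$, $\mathcal{D}_m^p$ is the set of $N\times N$ diagonal matrices $D$ for which there is $\Lambda\subseteq\{1,\dots,N\}$ with $|\Lambda|=m$, $D_{ii}=q_i$ for $i\in\Lambda$ and $0$ otherwise. $\mathcal{R}_m^p(F,G)=\max\{\rho(\Theta_G^*D\Theta_F):D\in\mathcal{D}_m^p\}$, with $\rho$ the spectral radius. A dual $G$ is a 1-erasure probabilistic spectrally optimal dual of $F$ if $\mathcal{R}_1^p(F,G)=\inf\{\mathcal{R}_1^p(F,G'): G'\text{ a dual of }F\}$. A dual $G$ is a 2-erasure probabilistic spectrally optimal dual of $F$ if it is a 1-erasure probabilistic spectrally optimal dual of $F$ and $\mathcal{R}_2^p(F,G)=\inf\{\mathcal{R}_2^p(F,G'): G'\text{ a 1-erasure probabilistic spectrally optimal dual of }F\}$. The sum $\sum_{r\ne s}$ runs over ordered pairs $(r,s)$ with $r\ne s$. *)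

From HB Require Import structures.
From mathcomp Require Import all_boot all_order all_algebra.
Set Implicit Arguments. Unset Strict Implicit. Unset Printing Implicit Defensive.
Import Order.TTheory GRing.Theory Num.Theory.
Local Open Scope ring_scope.

(* H = K^n with standard inner product, K = R (realcase = true) or C
   (realcase = false), both embedded in a numClosedFieldType C.
   Vectors are row vectors; operators act on the right: T f = f *m M. *)

Section Frames.
Variable C : numClosedFieldType.

Definition scal (realcase : bool) (z : C) : bool :=
  if realcase then z \is Num.real else true.

Definition inH (realcase : bool) n (f : 'rV[C]_n) : Prop :=
  forall k, scal realcase (f 0 k).

Definition dot n (x y : 'rV[C]_n) : C := \sum_(k < n) x 0 k * (y 0 k)^*.

Definition adjmx m n (M : 'M[C]_(m, n)) : 'M[C]_(n, m) := (map_mx Num.conj M)^T.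

Definition inspan (realcase : bool) n N (F : 'I_N -> 'rV[C]_n)
  (A : {set 'I_N}) (x : 'rV[C]_n) : Prop :=
  exists c : 'I_N -> C, (forall i, scal realcase (c i)) /\
    x = \sum_(i in A) c i *: F i.

Definition is_frame (realcase : bool) n N (F : 'I_N -> 'rV[C]_n) : Prop :=
  (forall i, inH realcase (F i)) /\
  (forall f, inH realcase f -> inspan realcase F setT f).

(* matrix of the frame operator S_F = Theta_F^* Theta_F : f |-> sum <f,f_i> f_i *)
Definition frame_op n N (F : 'I_N -> 'rV[C]_n) : 'M[C]_n :=
  \sum_(i < N) adjmx (F i) *m F i.

Definition is_dual (realcase : bool) n N (F G : 'I_N -> 'rV[C]_n) : Prop :=
  is_frame realcase G /\
  forall f, inH realcase f ->
    f = \sum_(i < N) dot f (F i) *: G i /\ f = \sum_(i < N) dot f (G i) *: F i.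

Definition canonical_dual n N (F : 'I_N -> 'rV[C]_n) : 'I_N -> 'rV[C]_n :=
  fun i => F i *m invmx (frame_op F).

Definition psd n (P : 'M[C]_n) : Prop :=
  adjmx P = P /\ forall x : 'rV[C]_n, 0 <= dot (x *m P) x.

Definition eigseq n (A : 'M[C]_n) : seq C :=
  sval (closed_field_poly_normal (char_poly A)).
Definition specrad n (A : 'M[C]_n) : C :=
  \big[Num.max/0]_(z <- eigseq A) `|z|.

Definition probability_seq N (p : 'I_N -> C) : Prop :=
  (forall i, 0 <= p i <= 1) /\ \sum_(i < N) p i = 1.

Definition weight (n N : nat) (p : 'I_N -> C) (i : 'I_N) : C :=
  (\sum_(j < N) p j) / (\sum_(j < N) p j - p i) * ((N - 1)%:R / n%:R).

(* Theta_G^* D Theta_F for D = diag(q on Lambda, 0 elsewhere) *)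
Definition erasure_op n N (q : 'I_N -> C) (F G : 'I_N -> 'rV[C]_n)
  (L : {set 'I_N}) : 'M[C]_n :=
  \sum_(i in L) q i *: (adjmx (F i) *m G i).

Definition Rmp (m : nat) n N (q : 'I_N -> C) (F G : 'I_N -> 'rV[C]_n) : C :=
  \big[Num.max/0]_(L : {set 'I_N} | #|L| == m) specrad (erasure_op q F G L).

Definition opt1 (realcase : bool) n N (q : 'I_N -> C) (F G : 'I_N -> 'rV[C]_n)
  : Prop :=
  is_dual realcase F G /\
  forall G', is_dual realcase F G' -> Rmp 1 q F G <= Rmp 1 q F G'.

Definition opt2 (realcase : bool) n N (q : 'I_N -> C) (F G : 'I_N -> 'rV[C]_n)
  : Prop :=
  opt1 realcase q F G /\
  forall G', opt1 realcase q F G' -> Rmp 2 q F G <= Rmp 2 q F G'.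

End Frames.

From HB Require Import structures.
From mathcomp Require Import all_boot all_order all_algebra.
From mathcomp Require Import ring.
Import Order.TTheory GRing.Theory Num.Theory.
Local Open Scope ring_scope.
Set Implicit Arguments. Unset Strict Implicit. Unset Printing Implicit Defensive.

(* For the canonical dual G every one-erasure operator is rank one with
   spectral radius v_i = q_i <S^-1 f_i, f_i> <= c.  For any dual G' the
   operator sum_(i in U1) f_i^* g'_i is the same as for G, because both sums
   over all i are the identity and span{f_i : i in U1} meets
   span{f_i : i in U2} only in 0.  Its trace shows that some i in U1 has
   q_i Re <g'_i, f_i> >= c, so G is 1-erasure optimal; and if G' is 1-erasure
   optimal, then <g'_i, f_i> = <g_i, f_i> on U1.  The trace of its square then
   shows that the off-diagonal products q_i q_j <g'_i, f_j> <g'_j, f_i> over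
   U1 have the same sum as for G, where they all equal the constant K of the
   hypothesis; so one of them has real part >= K.  The two-erasure operator
   of that pair has an eigenvalue c + w with w^2 equal to this product and
   Re w >= sqrt K, while every two-erasure eigenvalue l of G solves
   (l - v_a) (l - v_b) = K, whence |l| <= c + sqrt K. *)

Section BigMax.
Variable R : numDomainType.

Lemma bigmaxr_ge0 (I : Type) (r : seq I) (P : pred I) (F : I -> R) :
  (forall i, P i -> 0 <= F i) -> 0 <= \big[Num.max/0]_(i <- r | P i) F i.
Proof.
move=> F_ge0; elim/big_rec: _ => // i x Pi x_ge0.
by rewrite maxElt; case: ifP; rewrite ?F_ge0.
Qed.

Lemma bigmaxr_le (I : Type) (r : seq I) (P : pred I) (F : I -> R) B :
  0 <= B -> (forall i, P i -> F i <= B) ->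
  \big[Num.max/0]_(i <- r | P i) F i <= B.
Proof.
move=> B_ge0 F_le; elim/big_rec: _ => // i x Pi x_le.
by rewrite maxElt; case: ifP; rewrite ?F_le.
Qed.

Lemma le_bigmaxr (I : eqType) (r : seq I) (P : pred I) (F : I -> R) j :
  (forall i, P i -> 0 <= F i) -> j \in r -> P j ->
  F j <= \big[Num.max/0]_(i <- r | P i) F i.
Proof.
move=> F_ge0; elim: r => // a r IHr; rewrite in_cons big_cons.
have max_ge0 := bigmaxr_ge0 r F_ge0.
case/orP=> [/eqP-> | jr] Pj.
  by rewrite Pj maxElt; case: ifP => // /ltW.
have {IHr} := IHr jr Pj; case: ifP => // Pa le_j; apply: le_trans le_j _.
rewrite maxElt; case: ifP => // /negbT.
by rewrite real_ltNge ?ger0_real ?F_ge0 // negbK.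
Qed.

End BigMax.

Section InnerProduct.
Variable C : numClosedFieldType.
Implicit Types (m n : nat).

Lemma dotE n (x y : 'rV[C]_n) : x *m adjmx y = (dot x y)%:M.
Proof.
apply/matrixP => i j; rewrite !ord1 !mxE eqxx mulr1n.
by apply: eq_bigr => k _; rewrite !mxE.
Qed.

Lemma mulmx_adj_rank1 n (x y z : 'rV[C]_n) : x *m (adjmx y *m z) = dot x y *: z.
Proof. by rewrite mulmxA dotE mul_scalar_mx. Qed.

Lemma mxtrace_adj_rank1 n (y z : 'rV[C]_n) : \tr (adjmx y *m z) = dot z y.
Proof. by rewrite mxtrace_mulC dotE mxtrace_scalar. Qed.

Lemma dotC n (x y : 'rV[C]_n) : dot x y = (dot y x)^*.
Proof.
rewrite rmorph_sum; apply: eq_bigr => k _.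
by rewrite rmorphM /= conjCK mulrC.
Qed.

Lemma dotDl n (x y z : 'rV[C]_n) : dot (x + y) z = dot x z + dot y z.
Proof. by rewrite -big_split; apply: eq_bigr => k _; rewrite mxE mulrDl. Qed.

Lemma dotZl n a (x z : 'rV[C]_n) : dot (a *: x) z = a * dot x z.
Proof. by rewrite mulr_sumr; apply: eq_bigr => k _; rewrite mxE mulrA. Qed.

Lemma dot0l n (z : 'rV[C]_n) : dot 0 z = 0.
Proof. by rewrite /dot big1 // => k _; rewrite mxE mul0r. Qed.

Lemma dot_suml n (I : finType) (P : pred I) (a : I -> C) (x : I -> 'rV[C]_n) z :
  dot (\sum_(i | P i) a i *: x i) z = \sum_(i | P i) a i * dot (x i) z.
Proof.
elim/big_rec2: _ => [|i s t _ IH]; first by rewrite dot0l.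
by rewrite dotDl dotZl IH.
Qed.

Lemma dot_sumr n (I : finType) (P : pred I) (a : I -> C) (x : I -> 'rV[C]_n) z :
  dot z (\sum_(i | P i) a i *: x i) = \sum_(i | P i) (a i)^* * dot z (x i).
Proof.
rewrite dotC dot_suml rmorph_sum; apply: eq_bigr => i _ /=.
by rewrite rmorphM /= -dotC.
Qed.

Lemma dot_delta n (x : 'rV[C]_n) k : dot x (delta_mx 0 k) = x 0 k.
Proof.
rewrite /dot (bigD1 k) //= big1 => [|j jk].
  by rewrite !mxE !eqxx /= rmorph1 mulr1 addr0.
by rewrite !mxE eqxx /= (negbTE jk) /= rmorph0 mulr0.
Qed.

Lemma adjmxK m n (M : 'M[C]_(m, n)) : adjmx (adjmx M) = M.
Proof. by apply/matrixP => i j; rewrite !mxE conjCK. Qed.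

Lemma adjmxM m n p (A : 'M[C]_(m, n)) (B : 'M[C]_(n, p)) :
  adjmx (A *m B) = adjmx B *m adjmx A.
Proof. by rewrite /adjmx map_mxM trmx_mul. Qed.

Lemma adjmx0 m n : adjmx (0 : 'M[C]_(m, n)) = 0.
Proof. by apply/matrixP => i j; rewrite !mxE rmorph0. Qed.

Lemma adjmx_sum m n (I : finType) (P : pred I) (M : I -> 'M[C]_(m, n)) :
  adjmx (\sum_(i | P i) M i) = \sum_(i | P i) adjmx (M i).
Proof.
apply/matrixP => i j; rewrite !mxE !summxE rmorph_sum.
by apply: eq_bigr => k _; rewrite !mxE.
Qed.

Lemma dot_mulmxl n (x y : 'rV[C]_n) M : dot (x *m M) y = dot x (y *m adjmx M).
Proof.
have dotEmx (a b : 'rV[C]_n) : dot a b = (a *m adjmx b) 0 0.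
  by rewrite dotE mxE eqxx mulr1n.
by rewrite !dotEmx adjmxM adjmxK mulmxA.
Qed.

Lemma dot_mulmxr n (x y : 'rV[C]_n) M : dot x (y *m M) = dot (x *m adjmx M) y.
Proof. by rewrite dot_mulmxl adjmxK. Qed.

End InnerProduct.

Section SpectralRadius.
Variables (C : numClosedFieldType) (n : nat).
Implicit Types (A : 'M[C]_n) (x : 'rV[C]_n).

Lemma mem_eigseq A z : (z \in eigseq A) = eigenvalue A z.
Proof.
rewrite eigenvalue_root_char /eigseq.
case: (closed_field_poly_normal (char_poly A)) => r /= ->.
by rewrite (monicP (char_poly_monic A)) scale1r root_prod_XsubC.
Qed.

Lemma specrad_ge0 A : 0 <= specrad A.
Proof. by apply: bigmaxr_ge0 => z _; rewrite normr_ge0. Qed.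

Lemma eigenvalue_le_specrad A l x : x *m A = l *: x -> x != 0 -> `|l| <= specrad A.
Proof.
move=> xA x0; apply: (le_bigmaxr (F := fun z => `|z|)) => //.
by rewrite mem_eigseq; apply/eigenvalueP; exists x.
Qed.

Lemma specrad_le A B :
  0 <= B -> (forall l x, x *m A = l *: x -> x != 0 -> `|l| <= B) ->
  specrad A <= B.
Proof.
move=> B_ge0 eig_le; rewrite /specrad big_seq_cond; apply: bigmaxr_le => // z.
by rewrite andbT mem_eigseq => /eigenvalueP [x]; apply: eig_le.
Qed.

Lemma specrad_rank1 (f g : 'rV[C]_n) : specrad (adjmx f *m g) = `|dot g f|.
Proof.
apply/eqP; rewrite eq_le; apply/andP; split.
  apply: specrad_le => // l x; rewrite mulmx_adj_rank1 => xA x0.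
  have [xf0|xf0] := eqVneq (dot x f) 0.
    move/eqP: xA; rewrite xf0 scale0r eq_sym scaler_eq0 (negbTE x0) orbF.
    by move/eqP->; rewrite normr0.
  suff -> : l = dot g f by [].
  by apply: (mulIf xf0); rewrite -dotZl -xA dotZl mulrC.
have [->|gf0] := eqVneq (dot g f) 0; first by rewrite normr0 specrad_ge0.
apply: (eigenvalue_le_specrad (x := g)); first by rewrite mulmx_adj_rank1.
by apply: contraNneq gf0 => ->; rewrite dot0l.
Qed.

End SpectralRadius.

(* The nonzero eigenvalues of [adjmx f1 *m g1 + adjmx f2 *m g2] are those of
   the 2 x 2 matrix [[d1, e12], [e21, d2]] of inner products below. *)
Section RankTwo.
Variables (C : numClosedFieldType) (n : nat) (f1 f2 g1 g2 : 'rV[C]_n).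
Let A := adjmx f1 *m g1 + adjmx f2 *m g2.
Let d1 := dot g1 f1.
Let d2 := dot g2 f2.
Let e21 := dot g2 f1.
Let e12 := dot g1 f2.

Lemma rank2_eigenvalue_eq l (x : 'rV[C]_n) :
  x *m A = l *: x -> x != 0 -> l != 0 -> (l - d1) * (l - d2) = e21 * e12.
Proof.
move=> xA x0 l0; set u1 := dot x f1; set u2 := dot x f2.
have lx : l *: x = u1 *: g1 + u2 *: g2 by rewrite -xA mulmxDr !mulmx_adj_rank1.
have E1 : (l - d1) * u1 = e21 * u2.
  by rewrite mulrBl -[l * _]dotZl lx dotDl !dotZl /d1 /d2 /e12 /e21; ring.
have E2 : (l - d2) * u2 = e12 * u1.
  by rewrite mulrBl -[l * _]dotZl lx dotDl !dotZl /d1 /d2 /e12 /e21; ring.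
have [u10|u10] := eqVneq u1 0.
  have [u20|u20] := eqVneq u2 0.
    move/eqP: lx; rewrite u10 u20 !scale0r addr0 scaler_eq0.
    by rewrite (negbTE l0) (negbTE x0).
  apply: (mulIf u20); rewrite -mulrA E2 mulrCA E1; ring.
by apply: (mulIf u10); rewrite mulrAC E1 mulrAC -mulrA E2; ring.
Qed.

Lemma rank2_root_le_specrad l :
  (l - d1) * (l - d2) = e21 * e12 -> `|l| <= specrad A.
Proof.
move=> l_root.
have eigvec u1 u2 : l * u1 = u1 * d1 + u2 * e21 -> l * u2 = u1 * e12 + u2 * d2 ->
    (u1 != 0) || (u2 != 0) -> `|l| <= specrad A.
  move=> E1 E2 u_neq0; have [->|l0] := eqVneq l 0.
    by rewrite normr0 specrad_ge0.
  set x := u1 *: g1 + u2 *: g2.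
  have xf1 : dot x f1 = l * u1 by rewrite E1 dotDl !dotZl.
  have xf2 : dot x f2 = l * u2 by rewrite E2 dotDl !dotZl.
  apply: (eigenvalue_le_specrad (x := x)).
    by rewrite mulmxDr !mulmx_adj_rank1 xf1 xf2 scalerDr !scalerA.
  apply: contraTneq u_neq0 => x0; move: xf1 xf2; rewrite x0 !dot0l.
  move=> /esym/eqP + /esym/eqP; rewrite !mulf_eq0 (negbTE l0) /=.
  by move=> /eqP-> /eqP->; rewrite eqxx.
have eigvec1 : (e21 != 0) || (l - d1 != 0) -> `|l| <= specrad A.
  by apply: (eigvec e21 (l - d1)); [ring | rewrite -l_root; ring].
have [_|e21_0] := eqVneq e21 0; last by apply: eigvec1; rewrite e21_0.
have [l_d1|l_d1] := eqVneq (l - d1) 0; last by apply: eigvec1; rewrite l_d1 orbT.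
have [e12_0|e12_0] := eqVneq e12 0; last first.
  apply: (eigvec (l - d2) e12); rewrite ?e12_0 ?orbT //; last by ring.
  by rewrite [e12 * e21]mulrC -l_root; ring.
apply: (eigvec 1 0); rewrite ?oner_neq0 //.
  by move/eqP: l_d1; rewrite subr_eq0 => /eqP->; ring.
by rewrite e12_0; ring.
Qed.

End RankTwo.

Section RealVectors.
Variable C : numClosedFieldType.

Lemma scalN rc (a : C) : scal rc a -> scal rc (- a).
Proof. by case: rc => //=; rewrite rpredN. Qed.

Lemma scalB rc (a b : C) : scal rc a -> scal rc b -> scal rc (a - b).
Proof. by case: rc => //=; apply: rpredB. Qed.

Lemma inH_delta rc n (k : 'I_n) : inH rc (delta_mx 0 k : 'rV[C]_n).
Proof. by case: rc => // j; rewrite /scal mxE realn. Qed.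

Lemma inH_realP n (f : 'rV[C]_n) : inH true f <-> map_mx Num.conj f = f.
Proof.
split=> [f_real | fK k]; first by apply/rowP => k; rewrite mxE; apply/CrealP/f_real.
by apply/CrealP; rewrite -{2}fK mxE.
Qed.

Lemma scal_dot rc n (f g : 'rV[C]_n) : inH rc f -> inH rc g -> scal rc (dot f g).
Proof.
case: rc => // /inH_realP fK /inH_realP gK; apply/CrealP; rewrite -dotC.
by apply: eq_bigr => k _; rewrite -{1}gK -{2}fK !mxE mulrC.
Qed.

End RealVectors.

Section Frame.
Variables (C : numClosedFieldType) (n N : nat) (F : 'I_N -> 'rV[C]_n).

Lemma frame_opE x : x *m frame_op F = \sum_i dot x (F i) *: F i.
Proof. by rewrite mulmx_sumr; apply: eq_bigr => i _; rewrite mulmx_adj_rank1. Qed.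

Lemma adjmx_frame_op : adjmx (frame_op F) = frame_op F.
Proof. by rewrite adjmx_sum; apply: eq_bigr => i _; rewrite adjmxM adjmxK. Qed.

Lemma adjmx_invmx_frame_op : adjmx (invmx (frame_op F)) = invmx (frame_op F).
Proof. by rewrite /adjmx map_invmx trmx_inv -/(adjmx _) adjmx_frame_op. Qed.

Lemma dot_frame_op x : dot x (x *m frame_op F) = \sum_i `|dot x (F i)| ^+ 2.
Proof. by rewrite frame_opE dot_sumr; apply: eq_bigr => i _; rewrite normCK mulrC. Qed.

Lemma frame_op_unitmx rc : is_frame rc F -> frame_op F \in unitmx.
Proof.
move=> [_ F_span]; rewrite -row_free_unit; apply: inj_row_free => x xS0.
have xF0 i : dot x (F i) = 0.
  have sum0 : \sum_i `|dot x (F i)| ^+ 2 = 0.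
    by rewrite -dot_frame_op xS0 dotC dot0l conjC0.
  have := @psumr_eq0P _ _ predT _ (fun j _ => exprn_ge0 2 (normr_ge0 _)) sum0 i isT.
  by move/eqP; rewrite expf_eq0 /= normr_eq0 => /eqP.
apply/rowP => k; rewrite mxE -dot_delta.
have [a [_ ->]] := F_span _ (inH_delta _ rc k).
by rewrite dot_sumr big1 // => i _; rewrite xF0 mulr0.
Qed.

Lemma sum_adj_dual rc (G : 'I_N -> 'rV[C]_n) :
  (forall f, inH rc f -> f = \sum_i dot f (F i) *: G i) ->
  \sum_i adjmx (F i) *m G i = 1%:M.
Proof.
move=> G_rec; apply/row_matrixP => k.
rewrite !rowE mulmx_sumr mulmx1 [RHS](G_rec _ (inH_delta _ rc k)).
by apply: eq_bigr => i _; rewrite mulmx_adj_rank1.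
Qed.

Lemma canonical_dotC i j :
  dot (canonical_dual F j) (F i) = (dot (canonical_dual F i) (F j))^*.
Proof. by rewrite dot_mulmxl adjmx_invmx_frame_op -dotC. Qed.

Lemma canonical_dual_inH rc :
  (forall i, inH rc (F i)) -> forall i, inH rc (canonical_dual F i).
Proof.
case: rc => // F_H i; have F_real j := proj1 (inH_realP _) (F_H j).
apply/inH_realP; rewrite map_mxM map_invmx F_real map_mx_sum.
congr (_ *m invmx _); apply: eq_bigr => j _; rewrite map_mxM F_real.
congr (_ *m _); apply/matrixP => k l; rewrite !mxE /= conjCK !ord1.
by apply/esym/CrealP/F_H.
Qed.

Section CanonicalDual.
Variable rc : bool.
Hypothesis F_frame : is_frame rc F.
Let S_unit := frame_op_unitmx F_frame.

Lemma canonical_dual_ge0 i : 0 <= dot (canonical_dual F i) (F i).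
Proof.
rewrite -[F i](mulmxKV S_unit) dot_frame_op.
by apply: sumr_ge0 => j _; rewrite exprn_ge0.
Qed.

Lemma canonical_dual_rec f : f = \sum_i dot f (F i) *: canonical_dual F i.
Proof.
under eq_bigr => i _ do rewrite scalemxAl.
by rewrite -mulmx_suml -frame_opE mulmxK.
Qed.

Lemma canonical_dual_is_dual : is_dual rc F (canonical_dual F).
Proof.
have [F_H _] := F_frame.
split.
  split=> [|f f_H]; first exact: canonical_dual_inH.
  exists (fun i => dot f (F i)); split=> [i|]; first exact: scal_dot.
  by rewrite {1}(canonical_dual_rec f); apply: eq_bigl => i; rewrite inE.
move=> f _; split; first exact: canonical_dual_rec.
under eq_bigr => i _ do rewrite dot_mulmxr adjmx_invmx_frame_op.
by rewrite -frame_opE mulmxKV.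
Qed.

End CanonicalDual.
End Frame.

Section Scalars.
Variable C : numClosedFieldType.
Implicit Types (a b c l s w z : C).

Lemma norm_le_of_quadratic a b c s l :
  0 <= a <= c -> 0 <= b <= c -> 0 <= s -> (l - a) * (l - b) = s ^+ 2 ->
  `|l| <= c + s.
Proof.
move=> /andP[a_ge0 a_le] /andP[b_ge0 b_le] s_ge0 l_root.
rewrite real_leNgt ?realD ?ger0_real ?normr_ge0 ?(le_trans a_ge0 a_le) //.
apply/negP => l_gt.
have dist_gt d : 0 <= d -> d <= c -> s < `|l - d|.
  move=> d_ge0 d_le; apply: lt_le_trans (lerB_dist l d).
  by rewrite (ger0_norm d_ge0) ltrBrDr (le_lt_trans _ l_gt) // addrC lerD2r.
have := ltr_pM s_ge0 s_ge0 (dist_gt a a_ge0 a_le) (dist_gt b b_ge0 b_le).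
by rewrite -normrM l_root -expr2 ger0_norm ?exprn_ge0 // ltxx.
Qed.

Lemma eq_Re_of_norm_le z a : 'Re z = a -> `|z| <= a -> z = a.
Proof.
move=> Re_z z_le; have a_ge0 : 0 <= a := le_trans (normr_ge0 z) z_le.
have : `|z| ^+ 2 <= a ^+ 2 by rewrite ler_pXn2r // nnegrE normr_ge0.
rewrite normC2_Re_Im Re_z -lerBrDl subrr => Im_le0.
have /eqP : 'Im z ^+ 2 = 0.
  by apply/eqP; rewrite eq_le Im_le0 -real_normK ?Creal_Im // exprn_ge0.
by rewrite expf_eq0 /= => /eqP Im_z; rewrite [z]Crect Re_z Im_z mulr0 addr0.
Qed.

Lemma exists_sqrt_Re_ge0 z : exists2 w, w ^+ 2 = z & 0 <= 'Re w.
Proof.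
have [Re_ge0 | Re_lt0] := boolP (0 <= 'Re (sqrtC z)).
  by exists (sqrtC z); rewrite ?sqrtCK.
exists (- sqrtC z); first by rewrite sqrrN sqrtCK.
by rewrite raddfN oppr_ge0 ltW // real_ltNge ?Creal_Re ?real0.
Qed.

Lemma sqrtC_le_Re s w :
  0 <= s -> 0 <= 'Re w -> s <= 'Re (w ^+ 2) -> sqrtC s <= 'Re w.
Proof.
move=> s_ge0 Re_ge0 s_le.
rewrite -[X in _ <= X]sqrCK // ler_sqrtC ?nnegrE ?exprn_ge0 //.
apply: le_trans s_le _; rewrite expr2 ReM -expr2 gerBl -expr2.
by rewrite -real_normK ?Creal_Im // exprn_ge0.
Qed.

Lemma exists_le_Re_of_sum (I : finType) (P : pred I) (f g : I -> C) :
  (exists i, P i) -> (forall i, P i -> g i \is Num.real) ->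
  \sum_(i | P i) g i <= 'Re (\sum_(i | P i) f i) ->
  exists2 i, P i & g i <= 'Re (f i).
Proof.
move=> [i0 Pi0] g_real sum_le; apply/exists_inP; apply: contraTT sum_le.
move=> /exists_inPn Re_lt.
have Re_lt' i : P i -> 'Re (f i) < g i.
  by move=> Pi; rewrite real_ltNge ?Creal_Re ?g_real ?Re_lt.
rewrite raddf_sum /= -real_ltNge ?rpred_sum //.
by apply: ltr_sum Re_lt'; apply/hasP; exists i0; rewrite ?mem_index_enum.
Qed.

End Scalars.

Section FrameSums.
Variables (C : numClosedFieldType) (n N : nat) (F : 'I_N -> 'rV[C]_n).

Lemma row_sum_adjmx (P : pred 'I_N) (h : 'I_N -> 'rV[C]_n) l :
  row l (\sum_(i | P i) adjmx (h i) *m F i) = \sum_(i | P i) (h i 0 l)^* *: F i.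
Proof.
apply/rowP => k; rewrite !mxE !summxE; apply: eq_bigr => i _.
by rewrite !mxE big_ord1 !mxE.
Qed.

(* Each row of the restricted sum lies in [span F U] and, by the vanishing of
   the full sum, also in [span F (~: U)]. *)
Lemma sum_adjmx_set_eq0 rc (U : {set 'I_N}) (h : 'I_N -> 'rV[C]_n) :
  (forall x, inspan rc F U x -> inspan rc F (~: U) x -> x = 0) ->
  (forall i, inH rc (h i)) ->
  \sum_i adjmx (h i) *m F i = 0 -> \sum_(i in U) adjmx (h i) *m F i = 0.
Proof.
move=> U_sep h_H sum0; apply/row_matrixP => l; rewrite row0 row_sum_adjmx.
have h_scal i : scal rc (h i 0 l)^*.
  by case: rc h_H {U_sep} => // h_H; rewrite /scal CrealJ; apply: h_H.
apply: U_sep; first by exists (fun i => (h i 0 l)^*).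
exists (fun i => - (h i 0 l)^*); split=> [i|]; first exact: scalN.
move/(congr1 (row l)): sum0; rewrite row0 row_sum_adjmx (bigID (mem U)) /=.
move/eqP; rewrite addr_eq0 => /eqP->; rewrite -sumrN.
by apply: eq_big => [i|i _]; rewrite ?inE ?scaleNr.
Qed.

Lemma dual_sum_adjmx_set rc (U : {set 'I_N}) (G1 G2 : 'I_N -> 'rV[C]_n) :
  (forall x, inspan rc F U x -> inspan rc F (~: U) x -> x = 0) ->
  is_dual rc F G1 -> is_dual rc F G2 ->
  \sum_(i in U) adjmx (F i) *m G1 i = \sum_(i in U) adjmx (F i) *m G2 i.
Proof.
move=> U_sep [[G1_H _] G1_rec] [[G2_H _] G2_rec].
have adj_sum (P : pred 'I_N) : \sum_(i | P i) adjmx (G1 i - G2 i) *m F i =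
    adjmx (\sum_(i | P i) adjmx (F i) *m G1 i - \sum_(i | P i) adjmx (F i) *m G2 i).
  rewrite -sumrB adjmx_sum; apply: eq_bigr => i _.
  by rewrite -mulmxBr adjmxM adjmxK.
apply/eqP; rewrite -subr_eq0 -[X in X == 0]adjmxK -adj_sum.
rewrite (sum_adjmx_set_eq0 U_sep) ?adjmx0 // => [i k|].
  by rewrite !mxE; apply: scalB; [apply: G1_H | apply: G2_H].
rewrite adj_sum (sum_adj_dual (fun f f_H => (G1_rec f f_H).1)).
by rewrite (sum_adj_dual (fun f f_H => (G2_rec f f_H).1)) subrr adjmx0.
Qed.

Lemma mxtrace_sum_adjmx (U : {set 'I_N}) (G : 'I_N -> 'rV[C]_n) :
  \tr (\sum_(i in U) adjmx (F i) *m G i) = \sum_(i in U) dot (G i) (F i).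
Proof. by rewrite raddf_sum; apply: eq_bigr => i _; rewrite /= mxtrace_adj_rank1. Qed.

Lemma mxtrace_sqr_sum_adjmx (U : {set 'I_N}) (G : 'I_N -> 'rV[C]_n) :
  \tr ((\sum_(i in U) adjmx (F i) *m G i) *m (\sum_(i in U) adjmx (F i) *m G i)) =
  \sum_(i in U) \sum_(j in U) dot (G i) (F j) * dot (G j) (F i).
Proof.
rewrite mulmx_suml raddf_sum; apply: eq_bigr => i _.
rewrite mulmx_sumr raddf_sum; apply: eq_bigr => j _.
by rewrite /= -mulmxA mulmx_adj_rank1 -scalemxAr mxtraceZ mxtrace_adj_rank1.
Qed.

Variable q : 'I_N -> C.

Lemma specrad_erasure_op_set1 (G : 'I_N -> 'rV[C]_n) i :
  specrad (erasure_op q F G [set i]) = `|q i * dot (G i) (F i)|.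
Proof. by rewrite /erasure_op big_set1 scalemxAr specrad_rank1 dotZl. Qed.

Lemma erasure_op_set2 (G : 'I_N -> 'rV[C]_n) i j : i != j ->
  erasure_op q F G [set i; j] =
  adjmx (F i) *m (q i *: G i) + adjmx (F j) *m (q j *: G j).
Proof.
by move=> ij; rewrite /erasure_op big_setU1 ?big_set1 ?scalemxAr ?inE.
Qed.

Lemma specrad_le_Rmp m (G : 'I_N -> 'rV[C]_n) (L : {set 'I_N}) :
  #|L| == m -> specrad (erasure_op q F G L) <= Rmp m q F G.
Proof.
move=> L_card; apply: (le_bigmaxr (F := fun L => specrad (erasure_op q F G L))).
- by move=> ? _; apply: specrad_ge0.
- exact: mem_index_enum.
- exact: L_card.
Qed.

End FrameSums.

Lemma weight_gt0 (C : numClosedFieldType) n N (p : 'I_N -> C) i :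
  (0 < n)%N -> (1 < N)%N -> probability_seq p ->
  \sum_(j < N) p j - p i != 0 -> 0 < weight n p i.
Proof.
move=> n_gt0 N_gt1 [p01 p_sum]; rewrite /weight p_sum => p_ne1.
have p_le1 : p i <= 1 by case/andP: (p01 i).
apply: mulr_gt0; apply: divr_gt0; rewrite ?ltr0n ?subn_gt0 //.
by rewrite lt_def p_ne1 subr_ge0.
Qed.

Section Optimality.
Variables (C : numClosedFieldType) (rc : bool) (n N : nat).
Variables (F : 'I_N -> 'rV[C]_n) (q : 'I_N -> C).
Hypothesis F_frame : is_frame rc F.
Hypothesis q_gt0 : forall i, 0 < q i.
Let G := canonical_dual F.
Let v i := q i * dot (G i) (F i).
Let c := \big[Num.max/0]_(i < N) v i.
Let U := [set i | v i == c].
Hypothesis U_sep : forall x, inspan rc F U x -> inspan rc F (~: U) x -> x = 0.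
Hypothesis U_card : (2 <= #|U|)%N.

Let G_dual : is_dual rc F G := canonical_dual_is_dual F_frame.
Let q_real i : q i \is Num.real := gtr0_real (q_gt0 i).
Let v_ge0 i : 0 <= v i := mulr_ge0 (ltW (q_gt0 i)) (canonical_dual_ge0 F_frame i).
Let v_le_c i : v i <= c := le_bigmaxr (fun i _ => v_ge0 i) (mem_index_enum i) isT.
Let c_ge0 : 0 <= c := bigmaxr_ge0 _ (fun i _ => v_ge0 i).
Let v_U i : i \in U -> v i = c. Proof. by rewrite inE => /eqP. Qed.
Let U_other i : i \in U -> exists j, (j \in U) && (j != i).
Proof.
move=> iU; have /card_gt0P [j] : (0 < #|U :\ i|)%N.
  by have := U_card; rewrite (cardsD1 i) iU.
by rewrite in_setD1 andbC; exists j.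
Qed.
Let U_nonempty : exists i, i \in U.
Proof. by apply/card_gt0P; apply: leq_trans U_card. Qed.

Let canonical_dual_real i : dot (G i) (F i) \is Num.real.
Proof. exact: ger0_real (canonical_dual_ge0 F_frame i). Qed.

Lemma Rmp1_canonical_le : Rmp 1 q F G <= c.
Proof.
apply: bigmaxr_le => // L /cards1P [i ->].
by rewrite specrad_erasure_op_set1 (ger0_norm (v_ge0 i)).
Qed.

Lemma Re_le_Rmp1 G' i : q i * 'Re (dot (G' i) (F i)) <= Rmp 1 q F G'.
Proof.
rewrite -(ReMl (q_real i)); apply: le_trans (leif_Re_Creal _).1 _.
by rewrite -specrad_erasure_op_set1 specrad_le_Rmp ?cards1.
Qed.

Lemma dual_trace_U G' : is_dual rc F G' ->
  \sum_(i in U) dot (G' i) (F i) = \sum_(i in U) dot (G i) (F i).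
Proof.
move=> G'_dual.
by rewrite -!mxtrace_sum_adjmx (dual_sum_adjmx_set U_sep G'_dual G_dual).
Qed.

Lemma canonical_opt1 : opt1 rc q F G.
Proof.
split=> // G' G'_dual; apply: le_trans Rmp1_canonical_le _.
have sum_le : \sum_(i in U) dot (G i) (F i) <= 'Re (\sum_(i in U) dot (G' i) (F i)).
  by rewrite (dual_trace_U G'_dual) (Creal_ReP _ _) //; apply: rpred_sum => i _.
have [i iU le_i] :=
  exists_le_Re_of_sum U_nonempty (fun i _ => canonical_dual_real i) sum_le.
rewrite -(v_U iU); apply: le_trans (Re_le_Rmp1 G' i).
by rewrite ler_pM2l.
Qed.

Lemma opt1_diag G' : opt1 rc q F G' ->
  forall i, i \in U -> dot (G' i) (F i) = dot (G i) (F i).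
Proof.
move=> [G'_dual G'_opt]; have R1_le : Rmp 1 q F G' <= c.
  exact: le_trans (G'_opt G G_dual) Rmp1_canonical_le.
have norm_le i : i \in U -> `|dot (G' i) (F i)| <= dot (G i) (F i).
  move=> iU; rewrite -(ler_pM2l (q_gt0 i)) -{1}(gtr0_norm (q_gt0 i)) -normrM.
  rewrite -specrad_erasure_op_set1 -/(v i) (v_U iU).
  by apply: le_trans R1_le; rewrite specrad_le_Rmp ?cards1.
have Re_le i : i \in U -> 'Re (dot (G' i) (F i)) <= dot (G i) (F i).
  by move=> iU; apply: le_trans (leif_Re_Creal _).1 (norm_le i iU).
have gap0 : \sum_(i in U) (dot (G i) (F i) - 'Re (dot (G' i) (F i))) = 0.
  rewrite sumrB -raddf_sum /= (dual_trace_U G'_dual) (Creal_ReP _ _) ?subrr //.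
  by apply: rpred_sum => i _.
have gap_ge0 i : i \in U -> 0 <= dot (G i) (F i) - 'Re (dot (G' i) (F i)).
  by move=> iU; rewrite subr_ge0 Re_le.
move=> i iU; apply: eq_Re_of_norm_le (norm_le i iU).
by apply/esym/eqP; rewrite -subr_eq0 (psumr_eq0P gap_ge0 gap0 iU).
Qed.

Let offdiag G' :=
  \sum_(i in U) \sum_(j in U | j != i) dot (G' i) (F j) * dot (G' j) (F i).

Lemma opt1_offdiag G' : opt1 rc q F G' -> offdiag G' = offdiag G.
Proof.
move=> G'_opt.
have diag_offdiag G'' :
    \sum_(i in U) \sum_(j in U) dot (G'' i) (F j) * dot (G'' j) (F i) =
    \sum_(i in U) dot (G'' i) (F i) * dot (G'' i) (F i) + offdiag G''.
  by rewrite -big_split; apply: eq_bigr => i iU; rewrite (bigD1 i iU).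
have diag_eq : \sum_(i in U) dot (G' i) (F i) * dot (G' i) (F i) =
               \sum_(i in U) dot (G i) (F i) * dot (G i) (F i).
  by apply: eq_bigr => i iU; rewrite (opt1_diag G'_opt iU).
apply: (addrI (\sum_(i in U) dot (G i) (F i) * dot (G i) (F i))).
rewrite -{1}diag_eq -!diag_offdiag -!mxtrace_sqr_sum_adjmx.
by rewrite (dual_sum_adjmx_set U_sep G'_opt.1 G_dual).
Qed.

Variable K : C.
Hypothesis gram_offdiag :
  forall i j, i != j -> q i * q j * `|dot (G i) (F j)| ^+ 2 = K.

Let gram_pair i j : i != j -> q i * q j * (dot (G i) (F j) * dot (G j) (F i)) = K.
Proof. by move=> ij; rewrite (canonical_dotC F i j) -normCK gram_offdiag. Qed.

Let K_ge0 : 0 <= K.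
Proof.
have [i iU] := U_nonempty; have [j /andP[_ ji]] := U_other iU.
by rewrite -(gram_offdiag ji) mulr_ge0 ?exprn_ge0 // mulr_ge0 // ltW.
Qed.

Lemma Rmp2_canonical_le : Rmp 2 q F G <= c + sqrtC K.
Proof.
have bound_ge0 : 0 <= c + sqrtC K by rewrite addr_ge0 ?sqrtC_ge0 ?K_ge0.
apply: bigmaxr_le => // L /cards2P [a [b [ab ->]]].
rewrite erasure_op_set2 //; apply: specrad_le => // l x xA x0.
have [->|l0] := eqVneq l 0; first by rewrite normr0.
apply: (@norm_le_of_quadratic _ (v a) (v b)); rewrite ?v_ge0 ?v_le_c ?sqrtC_ge0 //.
rewrite sqrtCK -(gram_pair ab) /v.
by have := rank2_eigenvalue_eq xA x0 l0; rewrite !dotZl => ->; ring.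
Qed.

Lemma opt1_Re_pair G' : opt1 rc q F G' ->
  exists i j, [/\ i \in U, j \in U, i != j &
    K <= 'Re (q i * q j * (dot (G' i) (F j) * dot (G' j) (F i)))].
Proof.
move=> G'_opt.
have qq_gt0 i j : 0 < q i * q j by rewrite mulr_gt0.
have K_real i j : (q i * q j)^-1 * K \is Num.real.
  by rewrite rpredM ?rpredV ?rpredM ?q_real ?ger0_real.
have offdiag_G :
    offdiag G = \sum_(i in U) \sum_(j in U | j != i) (q i * q j)^-1 * K.
  apply: eq_bigr => i _; apply: eq_bigr => j /andP[_ ji].
  by rewrite -(gram_pair (i := i) (j := j)) 1?eq_sym // mulKf ?gt_eqF.
have sum_le : \sum_(i in U) \sum_(j in U | j != i) (q i * q j)^-1 * K <=
    'Re (\sum_(i in U) \sum_(j in U | j != i) dot (G' i) (F j) * dot (G' j) (F i)).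
  rewrite -/(offdiag G') (opt1_offdiag G'_opt) offdiag_G (Creal_ReP _ _) //.
  by rewrite rpred_sum // => i _; rewrite rpred_sum.
have [i iU le_i] := exists_le_Re_of_sum U_nonempty
  (fun i _ => rpred_sum _ (fun j _ => K_real i j)) sum_le.
have [j /andP [jU ji] le_ij] :=
  exists_le_Re_of_sum (U_other iU) (fun j _ => K_real i j) le_i.
exists i, j; split; rewrite 1?eq_sym //.
rewrite (ReMl (rpredM (q_real i) (q_real j))).
by rewrite -[K](mulVKf (lt0r_neq0 (qq_gt0 i j))) ler_pM2l.
Qed.

Lemma opt1_Rmp2_ge G' : opt1 rc q F G' -> c + sqrtC K <= Rmp 2 q F G'.
Proof.
move=> G'_opt; have [i [j [iU jU ij K_le]]] := opt1_Re_pair G'_opt.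
set z := q i * q j * _ in K_le; have [w w2 Re_w] := exists_sqrt_Re_ge0 z.
have L_card : #|[set i; j]| == 2 by rewrite cards2 ij.
apply: le_trans (specrad_le_Rmp F q G' L_card).
rewrite erasure_op_set2 //; apply: le_trans (rank2_root_le_specrad (l := c + w) _).
  apply: le_trans (leif_Re_Creal _).1.
  rewrite raddfD /= (Creal_ReP _ (ger0_real c_ge0)) lerD2l.
  by apply: sqrtC_le_Re K_ge0 Re_w _; rewrite w2.
rewrite !dotZl !(opt1_diag G'_opt) // -/(v i) -/(v j) !v_U // addrC addKr.
by rewrite -expr2 w2 /z; ring.
Qed.

Lemma canonical_opt2 : opt2 rc q F G.
Proof.
split=> [|G' G'_opt]; first exact: canonical_opt1.
exact: le_trans Rmp2_canonical_le (opt1_Rmp2_ge G'_opt).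
Qed.

End Optimality.

Theorem corollary3p1 (C : numClosedFieldType) (realcase : bool) (n N : nat)
  (F : 'I_N -> 'rV[C]_n) (p : 'I_N -> C) (P : 'M[C]_n) :
  (0 < n)%N -> (n <= N)%N ->
  is_frame realcase F ->
  probability_seq p ->
  (forall i, \sum_(j < N) p j - p i != 0) ->
  (* P = S_F^{-1/2} *)
  psd P -> P *m P = invmx (frame_op F) ->
  let q := weight n p in
  let v := fun i => q i * dot (F i *m P) (F i *m P) in
  let c := \big[Num.max/0]_(i < N) v i in
  let U1 := [set i | v i == c] in
  let U2 := ~: U1 in
  (forall x, inspan realcase F U1 x -> inspan realcase F U2 x -> x = 0) ->
  (2 <= #|U1|)%N ->
  (forall i j, i != j ->
     `|dot (F i *m P) (F j *m P)| =
     sqrtC ((q i * q j)^-1 *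
            ((n%:R - \sum_(k < N) (q k ^+ 2)^-1) /
             \sum_(r < N) \sum_(s < N | s != r) (q r * q s)^-1))) ->
  opt2 realcase q F (canonical_dual F).
Proof.
move=> n_gt0 _ F_frame p_prob p_ne [P_adj _] PP q v c U1 U2 U_sep U_card gram.
have gramE i j : dot (F i *m P) (F j *m P) = dot (canonical_dual F i) (F j).
  by rewrite /canonical_dual -PP mulmxA [RHS]dot_mulmxl P_adj.
have N_gt1 : (1 < N)%N.
  by apply: leq_trans U_card _; rewrite -[X in (_ <= X)%N]card_ord max_card.
have q_gt0 i : 0 < q i by apply: weight_gt0.
have U1E : U1 = [set i | q i * dot (canonical_dual F i) (F i) ==
    \big[Num.max/0]_(j < N) (q j * dot (canonical_dual F j) (F j))].
  apply/setP => i; rewrite !inE /c /v gramE.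
  by under eq_bigr => j _ do rewrite gramE.
rewrite /U2 {}U1E in U_sep U_card.
(* Only the independence of K from i and j matters, not its value. *)
move: gram; set K := (_ / _) => gram.
apply: (canonical_opt2 (K := K) F_frame q_gt0 U_sep U_card) => i j ij.
by rewrite -gramE gram // sqrtCK mulVKf // mulf_neq0 ?lt0r_neq0.
Qed.
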